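(* Let $I\subseteq[0,\infty)$ be an interval, let $f:I\to\mathbb{R}$ be twice differentiable on $I^\circ$, and let $a,b\in I^\circ$ with $a<b$ such that $f''\in L^1[a,b]$. Let $q>1$, $p=\frac{q}{q-1}$, and assume $|f''|^q$ is quasi-convex on $[a,b]$. If $M=\sup_{x\in(a,b)}|f''(x)|<\infty$, then $$\left|\frac{f(a)+f(b)}{2}-\frac{1}{b-a}\int_a^b f(x)\,dx\right|\le \frac{(b-a)^2}{2^{1+\frac1q}}\,M\,\bigl(\beta(2,p+1)\bigr)^{\frac1p}.$$
   Context: A function $g:[a,b]\to\mathbb{R}$ is quasi-convex on $[a,b]$ if $g(\lambda x+(1-\lambda)y)\le\max\{g(x),g(y)\}$ for all $x,y\in[a,b]$ and $\lambda\in[0,1]$. $\beta(x,y)=\int_0^1 t^{x-1}(1-t)^{y-1}\,dt$ for $x,y>0$. *)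

From Stdlib Require Import Reals Lra ClassicalEpsilon.
Open Scope R_scope.

(* Real power x^y with the convention 0^y = 0 (used only for y > 0). *)
Definition rpow (x y : R) : R :=
  if Rlt_dec 0 x then Rpower x y else 0.

Definition is_interval (I : R -> Prop) : Prop :=
  forall x y z, I x -> I z -> x <= y -> y <= z -> I y.

Definition int_pt (I : R -> Prop) (x : R) : Prop :=
  exists eps, 0 < eps /\ forall y, Rabs (y - x) < eps -> I y.

Definition quasi_convex_on (g : R -> R) (a b : R) : Prop :=
  forall x y lam, a <= x <= b -> a <= y <= b -> 0 <= lam <= 1 ->
    g (lam * x + (1 - lam) * y) <= Rmax (g x) (g y).

(* Beta function beta(x,y) = int_0^1 t^(x-1) (1-t)^(y-1) dt,
   as the value of the Riemann integral (when it exists). *)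
Definition beta_integrand (x y : R) (t : R) : R :=
  rpow t (x - 1) * rpow (1 - t) (y - 1).

Definition beta (x y : R) : R :=
  epsilon (inhabits 0)
    (fun l => exists pr : Riemann_integrable (beta_integrand x y) 0 1,
              RiemannInt pr = l).

(* The bound of the corollary is a consequence of the sharper classical
   trapezoid estimate
       | (f a + f b)/2 - 1/(b-a) int_a^b f |  <=  M (b-a)^2 / 12. *)

From Stdlib Require Import Reals Lra ClassicalEpsilon.
From Coquelicot Require Import Coquelicot.
Open Scope R_scope.

Lemma rpow_pos x r : 0 < x -> rpow x r = Rpower x r.
Proof. intros Hx; unfold rpow; destruct (Rlt_dec 0 x); [reflexivity | lra]. Qed.

Lemma rpow_nonpos x r : x <= 0 -> rpow x r = 0.
Proof. intros Hx; unfold rpow; destruct (Rlt_dec 0 x); [lra | reflexivity]. Qed.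

Lemma Rpower_gt0 x r : 0 < Rpower x r.
Proof. apply exp_pos. Qed.

Lemma rpow_small r eps h :
  0 < r -> 0 < eps -> Rabs h < Rpower eps (1 / r) -> Rabs (rpow h r) < eps.
Proof.
  intros Hr Heps Hh. destruct (Rlt_dec 0 h) as [Hpos | Hnpos].
  - rewrite rpow_pos, Rabs_pos_eq by (auto; left; apply Rpower_gt0).
    rewrite Rabs_pos_eq in Hh by lra.
    replace eps with (Rpower (Rpower eps (1 / r)) r)
      by (rewrite Rpower_mult; replace (1 / r * r) with 1 by (field; lra);
          apply Rpower_1; lra).
    apply Rlt_Rpower_l; lra.
  - rewrite rpow_nonpos, Rabs_R0 by lra. exact Heps.
Qed.

Lemma rpow_continuous r u : 0 < r -> 0 <= u -> continuity_pt (fun v => rpow v r) u.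
Proof.
  intros Hr [Hu | <-].
  - apply continuity_pt_locally_ext with (a := u) (f := fun v => Rpower v r); [exact Hu | |].
    + intros v Hv. unfold Rdist in Hv. apply Rabs_def2 in Hv. rewrite rpow_pos; [reflexivity | lra].
    + apply derivable_continuous_pt. exists (r * Rpower u (r - 1)).
      apply derivable_pt_lim_power; exact Hu.
  - intros eps Heps. exists (Rpower eps (1 / r)). split; [apply Rpower_gt0 |].
    intros v [_ Hv]. simpl in *. unfold R_dist in *.
    rewrite (rpow_nonpos 0), !Rminus_0_r in * by lra.
    apply rpow_small; auto.
Qed.

(* For r > 1, u |-> u^r has derivative r u^(r-1) on [0, +oo), also at u = 0
   where the convention 0^r = 0 makes the difference quotient h^(r-1) -> 0. *)
Lemma rpow_derivable r u : 1 < r -> 0 <= u ->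
  derivable_pt_lim (fun v => rpow v r) u (r * rpow u (r - 1)).
Proof.
  intros Hr [Hu | <-].
  - rewrite rpow_pos by exact Hu. apply is_derive_Reals.
    apply is_derive_ext_loc with (f := fun v => Rpower v r).
    + assert (Hu2 : 0 < u / 2) by lra. exists (mkposreal _ Hu2). intros v Hv.
      change (Rabs (v - u) < u / 2) in Hv. apply Rabs_def2 in Hv.
      rewrite rpow_pos; [reflexivity | lra].
    + apply is_derive_Reals, derivable_pt_lim_power; exact Hu.
  - rewrite (rpow_nonpos 0), Rmult_0_r by lra. intros eps Heps.
    exists (mkposreal _ (Rpower_gt0 eps (1 / (r - 1)))). intros h Hh0 Hh. simpl in Hh.
    rewrite Rplus_0_l, (rpow_nonpos 0), !Rminus_0_r by lra.
    destruct (Rlt_dec 0 h) as [Hpos | Hnpos].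
    + replace (rpow h r / h) with (rpow h (r - 1)).
      * apply rpow_small; auto; lra.
      * rewrite !rpow_pos by exact Hpos.
        replace r with ((r - 1) + 1) at 2 by ring.
        rewrite Rpower_plus, Rpower_1 by exact Hpos. field. lra.
    + rewrite rpow_nonpos by lra. unfold Rdiv. rewrite Rmult_0_l, Rabs_R0. exact Heps.
Qed.

Lemma rpow_reflect_derivable r t : 1 < r -> t <= 1 ->
  derivable_pt_lim (fun s => rpow (1 - s) r) t (- (r * rpow (1 - t) (r - 1))).
Proof.
  intros Hr Ht.
  change (fun s => rpow (1 - s) r) with (comp (fun v => rpow v r) (fun s => 1 - s)).
  replace (- (r * rpow (1 - t) (r - 1))) with (r * rpow (1 - t) (r - 1) * -1) by ring.
  apply derivable_pt_lim_comp.
  - apply is_derive_Reals. auto_derive; [exact I | ring].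
  - apply rpow_derivable; lra.
Qed.

Lemma rpow_reflect_continuous r t : 0 < r -> t <= 1 ->
  continuity_pt (fun s => rpow (1 - s) r) t.
Proof.
  intros Hr Ht.
  change (fun s => rpow (1 - s) r) with (comp (fun v => rpow v r) (fun s => 1 - s)).
  apply continuity_pt_comp.
  - apply derivable_continuous_pt. exists (-1).
    apply is_derive_Reals. auto_derive; [exact I | ring].
  - apply rpow_continuous; lra.
Qed.

Lemma beta_of_is_RInt x y l : is_RInt (beta_integrand x y) 0 1 l -> beta x y = l.
Proof.
  intros Hl.
  assert (pr : Riemann_integrable (beta_integrand x y) 0 1)
    by (apply ex_RInt_Reals_0; exists l; exact Hl).
  unfold beta.
  match goal with |- epsilon ?inh ?P = _ =>
    assert (Hex : exists v, P v) by (exists (RiemannInt pr), pr; reflexivity);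
    destruct (epsilon_spec inh P Hex) as [pr' <-] end.
  rewrite <- RInt_Reals. apply is_RInt_unique; exact Hl.
Qed.

Lemma rpow_one r : rpow 1 r = 1.
Proof. rewrite rpow_pos by lra. unfold Rpower. rewrite ln_1, Rmult_0_r. apply exp_0. Qed.

Lemma beta_integrand_2 p t : 0 < t < 1 ->
  beta_integrand 2 (p + 1) t = rpow (1 - t) p - rpow (1 - t) (p + 1).
Proof.
  intros Ht. unfold beta_integrand. rewrite !rpow_pos by lra.
  replace (2 - 1) with 1 by ring. replace (p + 1 - 1) with p by ring.
  rewrite Rpower_plus, !Rpower_1 by lra. ring.
Qed.

(* beta(2, p+1) = 1/((p+1)(p+2)), via the antiderivative
   (1-t)^(p+2)/(p+2) - (1-t)^(p+1)/(p+1). *)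
Lemma beta_2 p : 0 < p -> beta 2 (p + 1) = / ((p + 1) * (p + 2)).
Proof.
  intros Hp. apply beta_of_is_RInt.
  pose (F := fun t => / (p + 2) * rpow (1 - t) (p + 2) - / (p + 1) * rpow (1 - t) (p + 1)).
  pose (dF := fun t => rpow (1 - t) p - rpow (1 - t) (p + 1)).
  assert (HF : forall t, t <= 1 -> derivable_pt_lim F t (dF t)).
  { intros t Ht.
    assert (H := derivable_pt_lim_minus _ _ t _ _
      (derivable_pt_lim_scal _ (/ (p + 2)) t _ (rpow_reflect_derivable (p + 2) t ltac:(lra) Ht))
      (derivable_pt_lim_scal _ (/ (p + 1)) t _ (rpow_reflect_derivable (p + 1) t ltac:(lra) Ht))).
    replace (p + 2 - 1) with (p + 1) in H by ring. replace (p + 1 - 1) with p in H by ring.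
    replace (dF t) with (/ (p + 2) * - ((p + 2) * rpow (1 - t) (p + 1)) -
                         / (p + 1) * - ((p + 1) * rpow (1 - t) p))
      by (unfold dF; field; lra).
    exact H. }
  assert (HdF : is_RInt dF 0 1 (minus (F 1) (F 0))).
  { apply (is_RInt_derive (V := R_CompleteNormedModule));
      rewrite Rmin_left, Rmax_right by lra; intros t Ht.
    - apply is_derive_Reals, HF; lra.
    - apply continuity_pt_filterlim, continuity_pt_minus;
        apply rpow_reflect_continuous; lra. }
  replace (/ ((p + 1) * (p + 2))) with (minus (F 1) (F 0)).
  - apply is_RInt_ext with dF; [| exact HdF].
    rewrite Rmin_left, Rmax_right by lra. intros t Ht.
    symmetry. apply beta_integrand_2; exact Ht.
  - change (F 1 - F 0 = / ((p + 1) * (p + 2))). unfold F.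
    rewrite Rminus_0_r, Rminus_diag, !rpow_one, !rpow_nonpos by lra. field. lra.
Qed.

Lemma exp_le_exp x y : x <= y -> exp x <= exp y.
Proof. intros [Hlt | ->]; [left; apply exp_increasing, Hlt | right; reflexivity]. Qed.

(* A crude lower bound ln 3 >= 5/6, from e <= 3. *)
Lemma ln3_ge : 5 / 6 <= ln 3.
Proof.
  rewrite <- (ln_exp (5 / 6)). apply ln_le; [apply exp_pos |].
  apply Rle_trans with (exp 1); [apply exp_le_exp; lra | exact exp_le_3].
Qed.

(* exp x = exp(x/2)^2 >= (1 + x/2)^2 for x >= 0. *)
Lemma exp_ge_square x : 0 <= x -> (1 + x / 2) ^ 2 <= exp x.
Proof.
  intros Hx. replace x with (x / 2 + x / 2) at 2 by field. rewrite exp_plus.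
  assert (H := exp_ineq1_le (x / 2)). simpl. rewrite Rmult_1_r.
  apply Rmult_le_compat; lra.
Qed.

(* (p+1)(p+2) <= 2 * 3^p for p >= 1: write 3^p = 3 exp((p-1) ln 3) and
   use the quadratic lower bound for exp. *)
Lemma quadratic_le_pow3 p : 1 <= p -> (p + 1) * (p + 2) <= 2 * Rpower 3 p.
Proof.
  intros Hp. unfold Rpower.
  replace (p * ln 3) with (ln 3 + (p - 1) * ln 3) by ring.
  rewrite exp_plus, exp_ln by lra.
  assert (HL := ln3_ge).
  assert (Hsq := exp_ge_square ((p - 1) * ln 3) ltac:(nra)).
  assert (Hlin : 0 <= (p - 1) * (ln 3 - 5 / 6)) by nra.
  assert (Hquad : 0 <= (p - 1) ^ 2 * (ln 3 * ln 3 - 25 / 36)) by nra.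
  nra.
Qed.

(* For conjugate exponents, 2^(1+1/q) <= 12 ((p+1)(p+2))^(-1/p); taking
   logarithms this is (1/p) ln((p+1)(p+2)) <= (1/p) ln 2 + ln 3. *)
Lemma conjugate_constant_bound p q : 1 < p -> 1 / p + 1 / q = 1 ->
  Rpower 2 (1 + 1 / q) <= 12 * Rpower (/ ((p + 1) * (p + 2))) (1 / p).
Proof.
  intros Hp Hpq.
  assert (HX : 0 < (p + 1) * (p + 2)) by nra.
  assert (HlnX : ln ((p + 1) * (p + 2)) <= ln 2 + p * ln 3).
  { rewrite <- ln_Rpower, <- ln_mult by (try apply Rpower_gt0; lra).
    apply ln_le; [exact HX | apply quadratic_le_pow3; lra]. }
  unfold Rpower. rewrite ln_Rinv by exact HX.
  replace 12 with (exp (ln 12)) by (rewrite exp_ln; lra).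
  rewrite <- exp_plus. apply exp_le_exp.
  replace 12 with (2 * 2 * 3) by lra. rewrite (ln_mult (2 * 2) 3), (ln_mult 2 2) by lra.
  assert (H : 1 / p * ln ((p + 1) * (p + 2)) <= 1 / p * (ln 2 + p * ln 3))
    by (apply Rmult_le_compat_l; [left; apply Rdiv_lt_0_compat |]; lra).
  replace (1 / p * (ln 2 + p * ln 3)) with (1 / p * ln 2 + ln 3) in H
    by (field; lra).
  replace (1 + 1 / q) with (2 - 1 / p) by lra.
  lra.
Qed.

Lemma rolle_lim g g' u v : u < v -> g u = 0 -> g v = 0 ->
  (forall t, u <= t <= v -> derivable_pt_lim g t (g' t)) ->
  exists c, u < c < v /\ g' c = 0.
Proof.
  intros Huv Hu Hv Hg. destruct (MVT_cor2 g g' u v Huv Hg) as [c [Hc Hcuv]].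
  exists c. split; [exact Hcuv |].
  apply Rmult_eq_reg_r with (v - u); [| lra]. rewrite <- Hc, Hu, Hv. ring.
Qed.

Lemma is_RInt_line_plus_bump a b c s e :
  is_RInt (fun x => c + s * (x - a) + e / 2 * ((x - a) * (b - x))) a b
    ((b - a) * c + s * (b - a) ^ 2 / 2 + e * (b - a) ^ 3 / 12).
Proof.
  pose (G := fun x => c * x + s * (x - a) ^ 2 / 2
                      + e / 2 * ((b - a) * (x - a) ^ 2 / 2 - (x - a) ^ 3 / 3)).
  replace ((b - a) * c + s * (b - a) ^ 2 / 2 + e * (b - a) ^ 3 / 12)
    with (minus (G b) (G a)) by (unfold minus, plus, opp; simpl; unfold G; field).
  apply (is_RInt_derive (V := R_CompleteNormedModule) G).
  - intros x _. unfold G. auto_derive; [exact I | field].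
  - intros x _. apply (ex_derive_continuous (K := R_AbsRing) (V := R_NormedModule)).
    auto_derive. exact I.
Qed.

Section Interpolation.

Variables (f f' f'' : R -> R) (a b : R).
Hypothesis Hab : a < b.
Hypothesis Hf' : forall x, a <= x <= b -> derivable_pt_lim f x (f' x).
Hypothesis Hf'' : forall x, a <= x <= b -> derivable_pt_lim f' x (f'' x).

Let slope := (f b - f a) / (b - a).

(* Error of linear interpolation: f x minus the chord equals
   -f''(xi)/2 (x-a)(b-x), by Rolle applied to f - chord - K (t-a)(t-b)
   at a, x, b and then to its derivative. *)
Lemma interpolation_error x : a < x < b ->
  exists xi, a < xi < b /\
    f x - (f a + slope * (x - a)) = - (f'' xi / 2) * ((x - a) * (b - x)).
Proof.
  intros Hx.
  set (K := (f x - (f a + slope * (x - a))) / ((x - a) * (x - b))).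
  pose (phi := fun t => f t - (f a + slope * (t - a) + K * ((t - a) * (t - b)))).
  pose (phi' := fun t => f' t - (slope + K * (2 * t - a - b))).
  pose (phi'' := fun t => f'' t - 2 * K).
  assert (Dphi : forall t, a <= t <= b -> derivable_pt_lim phi t (phi' t)).
  { intros t Ht. apply derivable_pt_lim_minus; [apply Hf'; exact Ht |].
    apply is_derive_Reals. auto_derive; [exact I | ring]. }
  assert (Dphi' : forall t, a <= t <= b -> derivable_pt_lim phi' t (phi'' t)).
  { intros t Ht. apply derivable_pt_lim_minus; [apply Hf''; exact Ht |].
    apply is_derive_Reals. auto_derive; [exact I | ring]. }
  assert (Pa : phi a = 0) by (unfold phi; ring).
  assert (Pb : phi b = 0) by (unfold phi, slope; field; lra).
  assert (Px : phi x = 0) by (unfold phi, K; field; lra).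
  destruct (rolle_lim phi phi' a x) as [c1 [Hc1 Z1]];
    [lra | exact Pa | exact Px | intros t Ht; apply Dphi; lra |].
  destruct (rolle_lim phi phi' x b) as [c2 [Hc2 Z2]];
    [lra | exact Px | exact Pb | intros t Ht; apply Dphi; lra |].
  destruct (rolle_lim phi' phi'' c1 c2) as [xi [Hxi Z3]];
    [lra | exact Z1 | exact Z2 | intros t Ht; apply Dphi'; lra |].
  exists xi. split; [lra |].
  replace (f'' xi / 2) with K by (unfold phi'' in Z3; lra).
  unfold K. field. lra.
Qed.

Lemma interpolation_error_bound M (HM : forall x, a < x < b -> Rabs (f'' x) <= M) x :
  a <= x <= b -> Rabs (f x - (f a + slope * (x - a))) <= M / 2 * ((x - a) * (b - x)).
Proof.
  intros Hx.
  destruct (Req_dec x a) as [-> | Hxa]; [| destruct (Req_dec x b) as [-> | Hxb]].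
  - replace (f a - (f a + slope * (a - a))) with 0 by ring.
    rewrite Rabs_R0. right. ring.
  - replace (f b - (f a + slope * (b - a))) with 0 by (unfold slope; field; lra).
    rewrite Rabs_R0. right. ring.
  - destruct (interpolation_error x ltac:(lra)) as [xi [Hxi ->]].
    assert (Hxi_bound := HM xi Hxi).
    rewrite Rabs_mult, Rabs_Ropp, (Rabs_pos_eq ((x - a) * (b - x))) by nra.
    unfold Rdiv. rewrite Rabs_mult, (Rabs_pos_eq (/ 2)) by lra.
    apply Rmult_le_compat_r; nra.
Qed.

(* The classical trapezoid estimate, from integrating the two bounds
   chord -/+ M/2 (x-a)(b-x). *)
Lemma trapezoid_error M (HM : forall x, a < x < b -> Rabs (f'' x) <= M)
  (prf : Riemann_integrable f a b) :
  Rabs ((f a + f b) / 2 - / (b - a) * RiemannInt prf) <= M * (b - a) ^ 2 / 12.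
Proof.
  rewrite <- RInt_Reals.
  assert (Hf := ex_RInt_Reals_1 _ _ _ prf).
  assert (Hbound := interpolation_error_bound M HM).
  assert (Hup : RInt f a b <= (b - a) * f a + slope * (b - a) ^ 2 / 2 + M * (b - a) ^ 3 / 12).
  { rewrite <- (is_RInt_unique _ _ _ _ (is_RInt_line_plus_bump a b (f a) slope M)).
    apply RInt_le; [lra | exact Hf | eexists; apply is_RInt_line_plus_bump |].
    intros x Hx.
    destruct (proj1 (Rabs_le_between _ _) (Hbound x ltac:(lra))). lra. }
  assert (Hlo : (b - a) * f a + slope * (b - a) ^ 2 / 2 + - M * (b - a) ^ 3 / 12 <= RInt f a b).
  { rewrite <- (is_RInt_unique _ _ _ _ (is_RInt_line_plus_bump a b (f a) slope (- M))).
    apply RInt_le; [lra | eexists; apply is_RInt_line_plus_bump | exact Hf |].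
    intros x Hx.
    destruct (proj1 (Rabs_le_between _ _) (Hbound x ltac:(lra))). lra. }
  replace ((b - a) * f a + slope * (b - a) ^ 2 / 2) with ((b - a) * ((f a + f b) / 2))
    in Hup, Hlo by (unfold slope; field; lra).
  set (d := b - a) in *. set (T := (f a + f b) / 2) in *.
  assert (Hd : 0 < d) by (unfold d; lra).
  replace (T - / d * RInt f a b) with ((d * T - RInt f a b) * / d) by (field; lra).
  rewrite Rabs_mult, (Rabs_pos_eq (/ d)) by (left; apply Rinv_0_lt_compat, Hd).
  replace (M * d ^ 2 / 12) with (M * d ^ 3 / 12 * / d) by (field; lra).
  apply Rmult_le_compat_r; [left; apply Rinv_0_lt_compat, Hd |].
  apply Rabs_le. lra.
Qed.

End Interpolation.

Lemma paper_constant_ge q : 1 < q ->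
  let p := q / (q - 1) in
  1 / 12 <= rpow (beta 2 (p + 1)) (1 / p) / rpow 2 (1 + 1 / q).
Proof.
  intros Hq p.
  assert (Hp : 1 < p).
  { replace p with (1 + / (q - 1)) by (unfold p; field; lra).
    assert (0 < / (q - 1)) by (apply Rinv_0_lt_compat; lra). lra. }
  assert (Hpq : 1 / p + 1 / q = 1) by (unfold p; field; lra).
  rewrite beta_2 by lra.
  rewrite !rpow_pos by (try apply Rinv_0_lt_compat; nra).
  assert (H := conjugate_constant_bound p q Hp Hpq).
  set (P := Rpower 2 (1 + 1 / q)) in *. set (B := Rpower _ (1 / p)) in *.
  assert (HP : 0 < P) by apply Rpower_gt0.
  apply Rmult_le_reg_r with P; [exact HP |].
  replace (B / P * P) with B by (field; lra). lra.
Qed.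

Lemma segment_interior I (HI : is_interval I) a b :
  int_pt I a -> int_pt I b -> forall y, a <= y <= b -> int_pt I y.
Proof.
  intros [ea [Hea Ha]] [eb [Heb Hb]] y Hy.
  exists (Rmin ea eb). split; [apply Rmin_pos; assumption |].
  intros z Hz. assert (Hmin_a := Rmin_l ea eb). assert (Hmin_b := Rmin_r ea eb).
  apply Rabs_def2 in Hz.
  destruct (Rlt_le_dec z a); [apply Ha; rewrite Rabs_left; lra |].
  destruct (Rlt_le_dec b z); [apply Hb; rewrite Rabs_pos_eq; lra |].
  apply (HI a z b); [apply Ha | apply Hb | lra | lra]; rewrite Rminus_diag, Rabs_R0; assumption.
Qed.

Theorem corollary2p3
  (I : R -> Prop) (HI : is_interval I) (HI0 : forall x, I x -> 0 <= x)
  (f f' f'' : R -> R)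
  (Hf' : forall x, int_pt I x -> derivable_pt_lim f x (f' x))
  (Hf'' : forall x, int_pt I x -> derivable_pt_lim f' x (f'' x))
  (a b : R) (Ha : int_pt I a) (Hb : int_pt I b) (Hab : a < b)
  (q : R) (Hq : 1 < q)
  (Hqc : quasi_convex_on (fun x => rpow (Rabs (f'' x)) q) a b)
  (M : R)
  (HM : is_lub (fun y => exists x, a < x < b /\ y = Rabs (f'' x)) M)
  (prf : Riemann_integrable f a b) :
  let p := q / (q - 1) in
  Rabs ((f a + f b) / 2 - / (b - a) * RiemannInt prf)
    <= (b - a) ^ 2 / rpow 2 (1 + 1 / q) * M * rpow (beta 2 (p + 1)) (1 / p).
Proof.
  intros p.
  assert (HMbound : forall x, a < x < b -> Rabs (f'' x) <= M)
    by (intros x Hx; apply (proj1 HM); exists x; split; [exact Hx | reflexivity]).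
  assert (HM0 : 0 <= M)
    by (apply Rle_trans with (Rabs (f'' ((a + b) / 2))); [apply Rabs_pos | apply HMbound; lra]).
  assert (Hclassical := trapezoid_error f f' f'' a b Hab
    (fun x Hx => Hf' x (segment_interior I HI a b Ha Hb x Hx))
    (fun x Hx => Hf'' x (segment_interior I HI a b Ha Hb x Hx)) M HMbound prf).
  assert (Hconst := paper_constant_ge q Hq). fold p in Hconst.
  apply (Rle_trans _ _ _ Hclassical).
  replace ((b - a) ^ 2 / rpow 2 (1 + 1 / q) * M * rpow (beta 2 (p + 1)) (1 / p))
    with (M * (b - a) ^ 2 * (rpow (beta 2 (p + 1)) (1 / p) / rpow 2 (1 + 1 / q)))
    by (unfold Rdiv; ring).
  replace (M * (b - a) ^ 2 / 12) with (M * (b - a) ^ 2 * (1 / 12)) by field.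
  apply Rmult_le_compat_l; [apply Rmult_le_pos; [exact HM0 | apply pow2_ge_0] | exact Hconst].
Qed.
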